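(* Let $n, r$ be nonnegative integers with $n\geqslant\lceil r/2\rceil+2$. Then $m(L(K_n),r)\leqslant\lfloor (r+2)^2/8\rfloor$.
   Context: All graphs are finite, simple and undirected. For a nonnegative integer $r$ and a graph $G$, the $r$-neighbor bootstrap percolation process on $G$ starts with a set $A_0\subseteq V(G)$ of initially active vertices, and for $i\geqslant 1$, $A_i=A_{i-1}\cup\{v\in V(G) : |N(v)\cap A_{i-1}|\geqslant r\}$, where $N(v)$ is the set of neighbors of $v$. The set $A_0$ is a percolating set if $\bigcup_{i\geqslant 0}A_i=V(G)$; $m(G,r)$ is the minimum size of a percolating set. $L(G)$ is the line graph of $G$ (vertex set $E(G)$, two vertices adjacent iff the edges share an endpoint), and $K_n$ is the complete graph on $n$ vertices. *)

From mathcomp Require Import all_boot.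
Set Implicit Arguments. Unset Strict Implicit. Unset Printing Implicit Defensive.

Definition simple_graph (T : finType) (e : rel T) :=
  symmetric e /\ irreflexive e.

Definition nbhd (T : finType) (e : rel T) (v : T) : {set T} := [set u | e v u].

Definition bp_step (T : finType) (e : rel T) (r : nat) (A : {set T}) : {set T} :=
  A :|: [set v | r <= #|nbhd e v :&: A|].

Definition bp_iter (T : finType) (e : rel T) (r : nat) (A0 : {set T}) (i : nat) :=
  iter i (bp_step e r) A0.

Definition percolating (T : finType) (e : rel T) (r : nat) (A0 : {set T}) : Prop :=
  forall v : T, exists i, v \in bp_iter e r A0 i.

(* "m(G,r) <= k" : there is a percolating set of size at most k
   (m(G,r) is the minimum size of a percolating set). *)
Definition m_perc_le (T : finType) (e : rel T) (r k : nat) : Prop :=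
  exists A0 : {set T}, #|A0| <= k /\ percolating e r A0.

(* Line graph of K_n: vertices are the edges of K_n, i.e. 2-element subsets
   of 'I_n; two are adjacent iff distinct and they share an endpoint. *)
Definition KnEdge (n : nat) := {S : {set 'I_n} | #|S| == 2}.

Definition LKn_adj (n : nat) : rel (KnEdge n) :=
  fun a b => (a != b) && [exists x, (x \in val a) && (x \in val b)].

From mathcomp Require Import all_boot zify.
Set Implicit Arguments. Unset Strict Implicit. Unset Printing Implicit Defensive.

(* Let h = ceil(r/2). Seed the edges {a, b} of K_n with a < h and b among the
   h - a largest vertices, and, for even r, the matching edges {a, a + 1} with
   a < h and h - a odd; summing over a there are at most floor((r+2)^2/8) seeds.
   An edge xy becomes active as soon as r of the edges xz, yz are.  For c < h,
   and for y > c in increasing order, the edge cy gets activated through the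
   edges from c to the vertices below y, from y to the vertices below c, and
   the seeds at c and y: these are 2h - 1 + [r even] >= r when y <= h (the
   matching edge at y supplying the extra one), and at least 2h when y > h.
   Finally an edge between two vertices >= h has 2h active neighbours through
   the vertices below h. *)

Lemma cardsU_disjoint (T : finType) (A B : {set T}) :
  [disjoint A & B] -> #|A :|: B| = #|A| + #|B|.
Proof. by move=> dAB; rewrite cardsU (disjoint_setI0 dAB) cards0 subn0. Qed.

Lemma card_rel_sum (T : finType) (R : rel T) :
  #|[set p : T * T | R p.1 p.2]| = \sum_(a : T) #|[set b | R a b]|.
Proof.
rewrite -sum1dep_card -(eq_bigl _ _ (fun p => andTb (R p.1 p.2))).
rewrite -(pair_big_dep xpredT R (fun _ _ => 1)).
by apply: eq_bigr => a _; rewrite sum1dep_card.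
Qed.

Lemma sum_ord_rev_sub (F : nat -> nat) (n h : nat) : h <= n -> F 0 = 0 ->
  \sum_(a < n) F (h - a) = \sum_(i < h) F i.+1.
Proof.
move=> hn F0; rewrite -(big_mkord xpredT (fun a => F (h - a))).
rewrite (big_cat_nat (leq0n h) hn) /= [X in _ + X]big1_seq ?addn0; last first.
  move=> a /andP[_]; rewrite mem_index_iota => /andP[ha _].
  by move: ha; rewrite -subn_eq0 => /eqP ->.
rewrite big_rev_mkord subn0; apply: eq_bigr => i _.
by rewrite subKn.
Qed.

Lemma double_sum_succ_odd (ev : bool) k :
  (\sum_(i < k) (i.+1 + (ev && odd i.+1))).*2 = k * k.+1 + ev * (uphalf k).*2.
Proof.
elim: k => [|k IH]; first by rewrite big_ord0 muln0.
by rewrite big_ord_recr doubleD IH /=; case: ev {IH}; lia.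
Qed.

Section OrdinalSegments.

Variable n : nat.

Definition ord_prefix (k : nat) : {set 'I_n} := [set z : 'I_n | z < k].
Definition ord_suffix (k : nat) : {set 'I_n} := [set z : 'I_n | n - k <= z].

Lemma card_ord_prefix k : k <= n -> #|ord_prefix k| = k.
Proof.
move=> kn; rewrite -sum1dep_card -(big_ord_widen _ (fun=> 1)) //.
by rewrite sum1_card card_ord.
Qed.

Lemma card_ord_suffix k : k <= n -> #|ord_suffix k| = k.
Proof.
move=> kn; have -> : ord_suffix k = ~: ord_prefix (n - k).
  by apply/setP => z; rewrite !inE -leqNgt.
by rewrite cardsCs setCK card_ord card_ord_prefix ?leq_subr // subKn.
Qed.

Lemma card_ord_prefixD1 k (j : 'I_n) : k <= n -> j < k -> #|ord_prefix k :\ j| = k.-1.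
Proof.
move=> kn jk; apply/eqP; rewrite -(eqn_add2l (j \in ord_prefix k)) -cardsD1.
by rewrite card_ord_prefix // inE jk; case: k jk {kn}.
Qed.

End OrdinalSegments.

Section Bootstrap.

Variables (T : finType) (e : rel T) (r : nat) (A0 : {set T}).

Definition bp_reached (v : T) : Prop := exists i, v \in bp_iter e r A0 i.

Lemma bp_iter_mono : {homo bp_iter e r A0 : i j / i <= j >-> i \subset j}.
Proof.
move=> i j /subnKC <-; elim: (j - i) => [|k IH]; first by rewrite addn0.
by rewrite addnS /bp_iter iterS (subset_trans IH) ?subsetUl.
Qed.

Lemma bp_reached_set (B : {set T}) :
  {in B, forall u, bp_reached u} -> exists i, B \subset bp_iter e r A0 i.
Proof.
move=> reachedB; suff [i sBi] : exists i, {subset enum B <= bp_iter e r A0 i}.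
  by exists i; apply/subsetP => u uB; rewrite sBi ?mem_enum.
have : {subset enum B <= B} by move=> u; rewrite mem_enum.
elim: (enum B) => [|u s IH] sB; first by exists 0.
have [i sBi] : exists i, {subset s <= bp_iter e r A0 i}.
  by apply: IH => v vs; rewrite sB // inE vs orbT.
have [k uk] := reachedB u (sB u (mem_head u s)).
exists (maxn i k) => v; rewrite in_cons => /predU1P[->|vs].
  exact: subsetP (bp_iter_mono (leq_maxr i k)) u uk.
exact: subsetP (bp_iter_mono (leq_maxl i k)) v (sBi v vs).
Qed.

Lemma bp_reached_nbhd (v : T) (B : {set T}) :
  B \subset nbhd e v -> r <= #|B| -> {in B, forall u, bp_reached u} ->
  bp_reached v.
Proof.
move=> sBv rB /bp_reached_set[i sBi]; exists i.+1.
rewrite /bp_iter iterS inE; apply/orP; right; rewrite inE (leq_trans rB) //.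
by rewrite subset_leq_card // subsetI sBv.
Qed.

End Bootstrap.

Section LineGraphKn.

Variable n : nat.

Definition kedge (f0 : KnEdge n) (x z : 'I_n) : KnEdge n := insubd f0 [set x; z].

Lemma val_kedge f0 (x z : 'I_n) : x != z -> val (kedge f0 x z) = [set x; z].
Proof. by move=> xz; rewrite insubdK // unfold_in /= cards2 xz. Qed.

Lemma LKn_adj_kedge f0 (f : KnEdge n) (x y z : 'I_n) :
  val f = [set x; y] -> x != z -> y != z -> LKn_adj f (kedge f0 x z).
Proof.
move=> fxy xz yz; apply/andP; split; last first.
  by apply/existsP; exists x; rewrite fxy val_kedge // !set21.
apply: contraL (set22 x z) => /eqP fk.
by rewrite -(val_kedge f0 xz) -fk fxy !inE negb_or !(eq_sym z) xz yz.
Qed.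

Lemma card_kedge_imset f0 (x : 'I_n) (Z : {set 'I_n}) :
  x \notin Z -> #|kedge f0 x @: Z| = #|Z|.
Proof.
move=> xZ; apply: card_in_imset => z1 z2 z1Z z2Z /(congr1 val).
have xz z : z \in Z -> x != z by move=> zZ; apply: contraNneq xZ => ->.
rewrite !val_kedge ?xz // => /setP/(_ z1); rewrite !inE eqxx orbT eq_sym.
by rewrite (negbTE (xz z1 z1Z)) => /esym/eqP.
Qed.

Variables (r : nat) (A0 : {set KnEdge n}).

Definition edge_reached (x y : 'I_n) : Prop :=
  forall f : KnEdge n, val f = [set x; y] -> bp_reached (@LKn_adj n) r A0 f.

Lemma edge_reachedC x y : edge_reached x y -> edge_reached y x.
Proof. by move=> xy f fyx; apply: xy; rewrite fyx setUC. Qed.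

Lemma edge_reached_pair (x y : 'I_n) (X Y : {set 'I_n}) :
  x != y -> X :|: Y \subset ~: [set x; y] ->
  {in X, forall z, edge_reached x z} -> {in Y, forall z, edge_reached y z} ->
  r <= #|X| + #|Y| -> edge_reached x y.
Proof.
move=> xy sXY reachX reachY rXY f fxy.
have neqXY z : z \in X :|: Y -> (x != z) /\ (y != z).
  by move/(subsetP sXY); rewrite !inE negb_or !(eq_sym z) => /andP.
have neqX z : z \in X -> (x != z) /\ (y != z).
  by move=> zX; apply: neqXY; rewrite inE zX.
have neqY z : z \in Y -> (x != z) /\ (y != z).
  by move=> zY; apply: neqXY; rewrite inE zY orbT.
apply: (@bp_reached_nbhd _ _ _ _ _ (kedge f x @: X :|: kedge f y @: Y)).
- apply/subsetP => g /setUP[] /imsetP[z zZ ->]; rewrite inE.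
    by have [xz yz] := neqX z zZ; apply: LKn_adj_kedge fxy xz yz.
  by have [xz yz] := neqY z zZ; apply: LKn_adj_kedge yz xz; rewrite fxy setUC.
- rewrite cardsU_disjoint ?card_kedge_imset; first exact: rXY.
  + by apply/negP => /neqY[_]; rewrite eqxx.
  + by apply/negP => /neqX[]; rewrite eqxx.
  apply/pred0P => g /=; apply/negbTE/andP.
  case=> /imsetP[z1 z1X ->] /imsetP[z2 z2Y] /(congr1 val).
  have [[xz1 _] [xz2 yz2]] := (neqX z1 z1X, neqY z2 z2Y).
  rewrite !val_kedge // => /setP/(_ x).
  by rewrite !inE eqxx (negbTE xy) (negbTE xz2).
- move=> g /setUP[] /imsetP[z zZ ->].
    by apply: (reachX z zZ); rewrite val_kedge //; case: (neqX z zZ).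
  by apply: (reachY z zZ); rewrite val_kedge //; case: (neqY z zZ).
Qed.

End LineGraphKn.

Section SeedSet.

Variables n r : nat.
Local Notation h := (r %/ 2 + r %% 2).
Hypothesis hn : h + 2 <= n.

Definition short_seed (a b : nat) : bool := (~~ odd r && odd (h - a)) && (b == a.+1).
Definition seed (a b : 'I_n) : bool := (b \in ord_suffix n (h - a)) || short_seed a b.

Definition seed_set : {set KnEdge n} :=
  [set f | [exists a, exists b, seed a b && (val f == [set a; b])]].

Local Notation edge_reached := (edge_reached r seed_set).

Definition short_nbrs (y : nat) : {set 'I_n} :=
  [set z : 'I_n | short_seed y z || short_seed z y].

Lemma seed_reached (a b : 'I_n) : seed a b -> edge_reached a b.
Proof.
move=> sab f fab; exists 0; rewrite inE.
by apply/existsP; exists a; apply/existsP; exists b; rewrite sab fab eqxx.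
Qed.

Lemma short_nbrs_gt0 (y : nat) : 0 < y <= h -> ~~ odd r -> 0 < #|short_nbrs y|.
Proof.
move=> /andP[y_gt0 yh] r_even; pose z := if odd (h - y) then y.+1 else y.-1.
have zn : z < n by rewrite /z; case: ifP; lia.
by apply/card_gt0P; exists (Ordinal zn); rewrite inE /short_seed /= /z; case: ifP; lia.
Qed.

Lemma low_edge_reached (j : 'I_n) : j < h ->
  (forall c y : 'I_n, c < j -> c != y -> edge_reached c y) ->
  forall y : 'I_n, j < y -> edge_reached j y.
Proof.
move=> jh lowIH y; have [k] := ubnP y; elim: k y => // k IH y /ltnSE yk jy.
have yn := ltn_ord y.
have [|] := boolP (seed j y); first exact: seed_reached.
rewrite /seed /short_seed inE => nsjy.
pose X := ord_prefix n y :\ j :|: ord_suffix n (h - j).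
pose Y := ord_prefix n j :|: ord_suffix n (h - y) :|: short_nbrs y.
apply: (@edge_reached_pair _ _ _ _ _ X Y).
- by rewrite -val_eqE /=; lia.
- by apply/subsetP => z; rewrite !inE /short_seed -!val_eqE /=; lia.
- move=> z; rewrite !inE => /orP[/andP[zj zy] | zt].
    have [zj' | jz] := ltnP z j.
      by apply/edge_reachedC/lowIH; rewrite // -val_eqE /=; lia.
    by apply: IH; move: zj; rewrite -val_eqE /=; lia.
  by apply: seed_reached; rewrite /seed inE zt.
- move=> z; rewrite !inE => /orP[/orP[zj | zt] | /orP[zs | zs]].
  + by apply/edge_reachedC/lowIH; rewrite // -val_eqE /=; lia.
  + by apply: seed_reached; rewrite /seed inE zt.
  + by apply: seed_reached; rewrite /seed zs orbT.
  + by apply/edge_reachedC/seed_reached; rewrite /seed zs orbT.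
have cardX : #|X| = y.-1 + (h - j).
  rewrite cardsU_disjoint; last first.
    by apply/pred0P => z /=; have := ltn_ord z; rewrite !inE; lia.
  by rewrite card_ord_prefixD1 ?card_ord_suffix //; lia.
have cardY : #|Y| = j + (h - y) + #|short_nbrs y|.
  rewrite !cardsU_disjoint ?card_ord_suffix ?card_ord_prefix //; try lia.
    by apply/pred0P => z /=; have := ltn_ord z; rewrite !inE; lia.
  by apply/pred0P => z /=; have := ltn_ord z; rewrite !inE /short_seed; lia.
have := @short_nbrs_gt0 y; rewrite cardX cardY; lia.
Qed.

Lemma low_edges_reached (c y : 'I_n) : c < h -> c != y -> edge_reached c y.
Proof.
have [k] := ubnP c; elim: k c y => // k IH c y /ltnSE ck ch cy.
have lowIH (c' y' : 'I_n) : c' < c -> c' != y' -> edge_reached c' y'.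
  by move=> c'c; apply: IH; lia.
case: (ltngtP c y) => [c_lt_y | y_lt_c | /val_inj c_eq_y].
- exact: low_edge_reached.
- by apply/edge_reachedC/lowIH; rewrite // eq_sym.
- by rewrite c_eq_y eqxx in cy.
Qed.

Lemma edges_reached (x y : 'I_n) : x != y -> edge_reached x y.
Proof.
move=> xy; have [xh | hx] := ltnP x h; first exact: low_edges_reached.
have [yh | hy] := ltnP y h.
  by apply/edge_reachedC/low_edges_reached; rewrite // eq_sym.
have reach_low (u : 'I_n) : h <= u -> {in ord_prefix n h, forall z, edge_reached u z}.
  move=> hu z; rewrite inE => zh; apply/edge_reachedC/low_edges_reached => //.
  by rewrite -val_eqE /=; lia.
apply: (edge_reached_pair xy _ (reach_low x hx) (reach_low y hy)).
- by apply/subsetP => z; rewrite !inE -!val_eqE /=; lia.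
- by rewrite card_ord_prefix; lia.
Qed.

Lemma seed_set_percolating : percolating (@LKn_adj n) r seed_set.
Proof.
move=> f; have /cards2P[x [y [xy fxy]]] := valP f.
exact: edges_reached xy f fxy.
Qed.

Lemma card_seed_set_pairs :
  #|seed_set| <= #|[set p : 'I_n * 'I_n | seed p.1 p.2]|.
Proof.
have [-> | [f0 _]] := set_0Vmem seed_set; first by rewrite cards0.
apply: leq_trans (leq_imset_card (fun p => kedge f0 p.1 p.2) _).
apply/subset_leq_card/subsetP => f.
rewrite inE => /existsP[a /existsP[b /andP[sab /eqP fab]]].
apply/imsetP; exists (a, b); first by rewrite inE.
apply: val_inj; rewrite fab val_kedge //.
by move: sab; rewrite /seed /short_seed inE -val_eqE /=; have := ltn_ord a; lia.
Qed.

Lemma card_seed_nbrs (a : 'I_n) :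
  #|[set b | seed a b]| <= (h - a) + (~~ odd r && odd (h - a)).
Proof.
have short_le : #|[set b : 'I_n | short_seed a b]| <= ~~ odd r && odd (h - a).
  rewrite /short_seed; case: (_ && _) => /=.
    apply/card_le1_eqP => b1 b2; rewrite !inE => /eqP b1a /eqP b2a.
    by apply: val_inj; rewrite /= b1a b2a.
  by rewrite leqn0 cards_eq0; apply/eqP/setP => b; rewrite !inE.
have : [set b | seed a b] \subset
         ord_suffix n (h - a) :|: [set b : 'I_n | short_seed a b].
  by apply/subsetP => b; rewrite /seed !inE.
move/subset_leq_card/leq_trans; apply; apply: leq_trans (leq_card_setU _ _) _.
by rewrite card_ord_suffix ?leq_add2l //; lia.
Qed.

Lemma card_seed_set : #|seed_set| <= (r + 2) ^ 2 %/ 8.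
Proof.
pose ev := ~~ odd r.
have sum_le : #|seed_set| <= \sum_(i < h) (i.+1 + (ev && odd i.+1)).
  rewrite -(@sum_ord_rev_sub (fun i => i + (ev && odd i)) n h) ?andbF //; last lia.
  apply: leq_trans card_seed_set_pairs _; rewrite card_rel_sum.
  by apply: leq_sum => a _; apply: card_seed_nbrs.
have := double_sum_succ_odd ev h.
move: sum_le; move: (\sum_(i < h) _) => S.
rewrite leq_divRL // /ev; case: (boolP (odd r)) => /= r_odd; nia.
Qed.

End SeedSet.

Theorem lemma5p2 (n r : nat) :
  (r %/ 2 + r %% 2) + 2 <= n ->
  m_perc_le (@LKn_adj n) r ((r + 2) ^ 2 %/ 8).
Proof.
move=> hn; exists (seed_set n r); split.
- exact: card_seed_set.
- exact: seed_set_percolating.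
Qed.
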